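(* Let $d\in\mathbb N$ and let $(G_n)$ be a sequence of finite graphs with maximum degree at most $d$ and $\lim_{n\to\infty}|G_n|=\infty$. Then the following are equivalent: (1) $(G_n)$ is BS-convergent; (2) $(G_n)$ is $\mathrm{FO}^{\mathrm{local}}_1$-convergent; (3) $(G_n)$ is $\mathrm{FO}^{\mathrm{local}}$-convergent.
   Context: For a first-order graph formula $\phi$ with free variables among $x_1,\dots,x_p$ and a finite graph $G$, $\langle\phi,G\rangle=|\{(v_1,\dots,v_p)\in V(G)^p:G\models\phi(v_1,\dots,v_p)\}|/|G|^p$; for a set $X$ of formulas, $(G_n)$ is $X$-convergent if $\langle\phi,G_n\rangle$ converges for all $\phi\in X$. A formula $\phi$ with free variables among $x_1,\dots,x_p$ is $r$-local if for every graph $G$ and $v_1,\dots,v_p\in V(G)$, $G\models\phi(v_1,\dots,v_p)$ iff $G[N_r(v_1,\dots,v_p)]\models\phi(v_1,\dots,v_p)$, where $G[N_r(v_1,\dots,v_p)]$ is the subgraph induced by the vertices at distance at most $r$ from some $v_i$; $\phi$ is local if it is $r$-local for some $r$. $\mathrm{FO}^{\mathrm{local}}$ is the set of local formulas and $\mathrm{FO}^{\mathrm{local}}_p$ the set of local formulas with free variables among $x_1,\dots,x_p$. $(G_n)$ is BS-convergent if for every integer $r$ and every finite rooted connected graph $(F,o)$ with maximum degree at most $d$ the limit $\lim_{n\to\infty}|\{v: (B_{G_n}(v,r),v)\cong(F,o)\}|/|G_n|$ exists, where $B_G(v,r)$ is the subgraph induced by vertices at distance at most $r$ from $v$ and $\cong$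 is isomorphism of rooted graphs. *)

From Stdlib Require Import Reals.
From mathcomp Require Import all_boot.

Set Implicit Arguments.
Unset Strict Implicit.
Unset Printing Implicit Defensive.

Record graph := Graph {
  vert :> finType;
  adj : rel vert;
  adj_sym : symmetric adj;
  adj_irr : irreflexive adj }.

Section Induced.
Variables (G : graph) (S : {set vert G}).
Definition ind_vert : finType := {x : vert G | x \in S}.
Definition ind_adj : rel ind_vert := fun x y => adj (val x) (val y).
Lemma ind_adj_sym : symmetric ind_adj.
Proof. by move=> x y; rewrite /ind_adj adj_sym. Qed.
Lemma ind_adj_irr : irreflexive ind_adj.
Proof. by move=> x; rewrite /ind_adj adj_irr. Qed.
Definition induced : graph := Graph ind_adj_sym ind_adj_irr.
End Induced.

Fixpoint within (G : graph) (r : nat) (x y : vert G) : bool :=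
  match r with
  | 0 => x == y
  | r'.+1 => within r' x y || [exists z, within r' x z && adj z y]
  end.

Definition nbhd (G : graph) (p r : nat) (v : 'I_p -> vert G) : {set vert G} :=
  [set y | [exists i : 'I_p, within r (v i) y]].

Definition ball (G : graph) (v : vert G) (r : nat) : graph :=
  induced [set y | within r v y].

Definition max_deg_le (d : nat) (G : graph) : Prop :=
  forall v : vert G, #|[pred w | adj v w]| <= d.

Definition connected_graph (G : graph) : Prop :=
  forall x y : vert G, connect (@adj G) x y.

(** Isomorphism of rooted graphs (A, a) ~ (B, b), where the root of A is
    specified by a predicate [isroot] (used for balls, whose root is
    the centre vertex seen in the ambient graph). *)
Definition rooted_iso_b (A B : graph) (isroot : pred (vert A)) (b : vert B) : bool :=
  [exists f : {ffun vert A -> vert B}, exists g : {ffun vert B -> vert A},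
     [&& [forall x, g (f x) == x], [forall y, f (g y) == y],
         [forall x, isroot x ==> (f x == b)] &
         [forall x, forall y, adj x y == adj (f x) (f y)]]].

Definition ball_iso (G : graph) (r : nat) (v : vert G) (F : graph) (o : vert F) : bool :=
  rooted_iso_b (A := ball v r) (fun x => val x == v) o.

Inductive form :=
  | FAdj of nat & nat
  | FEq of nat & nat
  | FTrue
  | FNot of form
  | FAnd of form & form
  | FOr of form & form
  | FEx of nat & form
  | FAll of nat & form.

Fixpoint free (f : form) : seq nat :=
  match f with
  | FAdj i j | FEq i j => [:: i; j]
  | FTrue => [::]
  | FNot g => free g
  | FAnd g h | FOr g h => free g ++ free h
  | FEx i g | FAll i g => [seq k <- free g | k != i]
  end.

Definition free_among (p : nat) (f : form) : bool := all (fun k => k < p) (free f).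

(** Assignments are partial (the empty graph has no total assignment);
    unassigned variables make atoms false (never used for the formulas
    considered, whose free variables are all assigned). *)
Definition assign (V : Type) (e : nat -> option V) (i : nat) (v : V) : nat -> option V :=
  fun k => if k == i then Some v else e k.

Fixpoint sat (G : graph) (e : nat -> option (vert G)) (f : form) : bool :=
  match f with
  | FAdj i j => if (e i, e j) is (Some x, Some y) then adj x y else false
  | FEq i j => if (e i, e j) is (Some x, Some y) then x == y else false
  | FTrue => true
  | FNot g => ~~ sat e g
  | FAnd g h => sat e g && sat e h
  | FOr g h => sat e g || sat e h
  | FEx i g => [exists v : vert G, sat (assign e i v) g]
  | FAll i g => [forall v : vert G, sat (assign e i v) g]
  end.

Definition tenv (V : Type) (p : nat) (v : 'I_p -> V) : nat -> option V :=
  fun k => match @insub nat (fun k => k < p) _ k with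
           | Some j => Some (v j)
           | None => None
           end.

Definition models (G : graph) (p : nat) (f : form) (v : 'I_p -> vert G) : bool :=
  sat (tenv v) f.

Definition models_local (G : graph) (p r : nat) (f : form) (v : 'I_p -> vert G) : bool :=
  sat (G := induced (nbhd r v))
      (fun k => obind (fun x => insub x) (tenv v k)) f.

Definition r_local (p r : nat) (f : form) : Prop :=
  forall (G : graph) (v : 'I_p -> vert G), models f v = models_local r f v.

Definition FO_local_p (p : nat) (f : form) : Prop :=
  free_among p f /\ exists r, r_local p r f.

Definition stone (p : nat) (f : form) (G : graph) : R :=
  Rdiv (INR #|[pred v : {ffun 'I_p -> vert G} | models f v]|)
       (INR (#|vert G| ^ p)).

Definition converges (u : nat -> R) : Prop := exists l : R, Un_cv u l.

Definition FOlocal1_convergent (Gs : nat -> graph) : Prop :=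
  forall f, FO_local_p 1 f -> converges (fun n => stone 1 f (Gs n)).

Definition FOlocal_convergent (Gs : nat -> graph) : Prop :=
  forall p f, FO_local_p p f -> converges (fun n => stone p f (Gs n)).

Definition BS_convergent (d : nat) (Gs : nat -> graph) : Prop :=
  forall (r : nat) (F : graph) (o : vert F),
    connected_graph F -> max_deg_le d F ->
    converges (fun n =>
      Rdiv (INR #|[pred v : vert (Gs n) | ball_iso r v o]|) (INR #|vert (Gs n)|)).

From Stdlib Require Import Reals Lra ClassicalDescription Classical FunctionalExtensionality.
From mathcomp Require Import all_boot.
Set Implicit Arguments.
Unset Strict Implicit.
Unset Printing Implicit Defensive.

(* Let f be r-local with p free variables and call a tuple scattered when its entries
   are pairwise at distance more than 2r+1.  The r-neighbourhood of a scattered tuple is the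
   disjoint union of the r-balls around its entries, with no edges between them, so whether f holds
   depends only on the rooted isomorphism types of these balls.  Degrees are at most d, so balls
   have at most (d+1)^r vertices and there are finitely many types; and only O(|G|^(p-1)) tuples
   are not scattered.  Hence <f, G_n> is, up to O(1/|G_n|), a fixed polynomial in the frequencies
   of the ball types, which converge when (G_n) is BS-convergent.  Conversely, "the r-ball around
   x_0 is isomorphic to (F, o)" is expressed by an r-local formula with one free variable. *)

Section Within.
Variable G : graph.
Implicit Types x y z : vert G.

Lemma within_refl r x : within r x x.
Proof. by elim: r => [|r IH] /=; rewrite ?eqxx ?IH. Qed.

Lemma within_trans a b x y z : within a x y -> within b y z -> within (a + b) x z.
Proof.
elim: b z => [|b IH] z /=; first by rewrite addn0 => Hxy /eqP <-.
rewrite addnS /= => Hxy /orP [Hyz|/existsP [w /andP [Hyw Hwz]]]; first by rewrite IH.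
by apply/orP; right; apply/existsP; exists w; rewrite IH.
Qed.

Lemma within_adj x y : adj x y -> within 1 x y.
Proof. by move=> Hxy /=; apply/orP; right; apply/existsP; exists x; rewrite eqxx. Qed.

Lemma within_sym r x y : within r x y -> within r y x.
Proof.
elim: r x y => [|r IH] x y /=; first by rewrite eq_sym.
case/orP => [/IH -> //|/existsP [z /andP [Hxz Hzy]]].
have Hyz : within 1 y z by rewrite within_adj // adj_sym.
by have := within_trans Hyz (IH _ _ Hxz); rewrite add1n.
Qed.

Lemma within_mono r s x y : r <= s -> within r x y -> within s x y.
Proof.
by move=> /subnKC <- Hxy; rewrite addnC; apply: within_trans (within_refl _ _) Hxy.
Qed.

End Within.

Lemma eq_sat (G : graph) (e e' : nat -> option (vert G)) f : e =1 e' -> sat e f = sat e' f.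
Proof. by move=> /functional_extensionality ->. Qed.

Section SatIso.
Variables (A B : graph) (f : vert A -> vert B) (g : vert B -> vert A).
Hypotheses (fK : cancel f g) (gK : cancel g f) (f_adj : forall x y, adj (f x) (f y) = adj x y).

Lemma assign_omap (e : nat -> option (vert A)) (e' : nat -> option (vert B)) i u :
  e' =1 omap f \o e -> assign e' i (f u) =1 omap f \o assign e i u.
Proof. by move=> He k; rewrite /assign /=; case: ifP => // _; rewrite He. Qed.

Lemma sat_iso phi (e : nat -> option (vert A)) (e' : nat -> option (vert B)) :
  e' =1 omap f \o e -> sat e' phi = sat e phi.
Proof.
elim: phi e e' => [i j|i j||phi IH|phi IH psi IH'|phi IH psi IH'|i phi IH|i phi IH] e e' He /=.
- by rewrite !He /=; case: (e i) => [x|]; case: (e j) => [y|] //=; rewrite f_adj.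
- by rewrite !He /=; case: (e i) => [x|]; case: (e j) => [y|] //=; rewrite (can_eq fK).
- by [].
- by rewrite (IH e e').
- by rewrite (IH e e') // (IH' e e').
- by rewrite (IH e e') // (IH' e e').
- apply/existsP/existsP => [[u]|[u]].
    by rewrite -{1}(gK u) (IH _ _ (assign_omap i (g u) He)) => Hu; exists (g u).
  by rewrite -(IH _ _ (assign_omap i u He)) => Hu; exists (f u).
- apply/forallP/forallP => Hu u; first by rewrite -(IH _ _ (assign_omap i u He)).
  by rewrite -(gK u) (IH _ _ (assign_omap i (g u) He)).
Qed.
End SatIso.

Definition rooted_iso (A B : graph) (isroot : pred (vert A)) (b : vert B) : Prop :=
  exists (f : vert A -> vert B) (g : vert B -> vert A),
    [/\ cancel f g, cancel g f, (forall x, isroot x -> f x = b) &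
        (forall x y, adj (f x) (f y) = adj x y)].

Lemma rooted_iso_bP (A B : graph) (isroot : pred (vert A)) (b : vert B) :
  reflect (rooted_iso isroot b) (rooted_iso_b isroot b).
Proof.
apply: (iffP idP).
  case/existsP=> f /existsP [g /and4P [/forallP fK /forallP gK /forallP fr /forallP fadj]].
  exists f, g; split=> [x|y|x /(implyP (fr x))/eqP //|x y].
  - exact/eqP.
  - exact/eqP.
  - by have /forallP/(_ y)/eqP := fadj x.
case=> f [g [fK gK fr fadj]].
apply/existsP; exists [ffun x => f x]; apply/existsP; exists [ffun y => g y].
apply/and4P; split; apply/forallP => x; rewrite ?ffunE.
- by rewrite fK.
- by rewrite gK.
- by apply/implyP => /fr ->.
- by apply/forallP => y; rewrite !ffunE fadj.
Qed.

Lemma rooted_iso_trans (A B C : graph) (isrootA : pred (vert A)) (isrootB : pred (vert B))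
    (b : vert B) (c : vert C) :
  isrootB b -> rooted_iso isrootA b -> rooted_iso isrootB c -> rooted_iso isrootA c.
Proof.
move=> Hb [f1 [g1 [f1K g1K f1r f1adj]]] [f2 [g2 [f2K g2K f2r f2adj]]].
exists (f2 \o f1), (g1 \o g2); split=> [x|x|x /f1r /= ->|x y] /=.
- by rewrite f2K f1K.
- by rewrite g1K g2K.
- exact: f2r.
- by rewrite f2adj f1adj.
Qed.

Lemma rooted_iso_sym (A B : graph) (isroot : pred (vert A)) (a : vert A) (b : vert B) :
  isroot =1 pred1 a -> rooted_iso isroot b -> rooted_iso (pred1 b) a.
Proof.
move=> Hroot [f [g [fK gK fr fadj]]]; exists g, f; split=> // [y /eqP ->|x y].
  by rewrite -(fr a) ?fK ?Hroot /=.
by rewrite -fadj !gK.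
Qed.

Lemma rooted_iso_eq_root (A B : graph) (isroot isroot' : pred (vert A)) (b : vert B) :
  isroot' =1 isroot -> rooted_iso isroot b -> rooted_iso isroot' b.
Proof. by move=> E [f [g [fK gK fr fadj]]]; exists f, g; split=> // x; rewrite E => /fr. Qed.

Lemma card_bigcup_leq (T I : finType) (P : pred I) (F : I -> {set T}) :
  #|\bigcup_(i | P i) F i| <= \sum_(i | P i) #|F i|.
Proof.
elim/big_rec2: _ => [|i n U _ leUn]; first by rewrite cards0.
by rewrite (leq_trans (leq_card_setU (F i) U).1) ?leq_add2l.
Qed.

Lemma card_within_leq (d : nat) (G : graph) (x : vert G) r :
  max_deg_le d G -> #|[set y | within r x y]| <= d.+1 ^ r.
Proof.
move=> Hd; elim: r => [|r IH].
  by rewrite (@eq_card _ _ (pred1 x)) ?card1 // => y; rewrite !inE eq_sym.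
set S := [set y | within r x y].
have sub_step : [set y | within r.+1 x y] \subset S :|: \bigcup_(z in S) [set y | adj z y].
  apply/subsetP => y; rewrite !inE /= => /orP [->//|/existsP [z /andP [Hz Hzy]]].
  by apply/orP; right; apply/bigcupP; exists z; rewrite ?inE.
have card_nbrs : \sum_(z in S) #|[set y | adj z y]| <= #|S| * d.
  rewrite -sum_nat_const; apply: leq_sum => z _.
  by apply: leq_trans (Hd z); rewrite (eq_card (B := [pred w | adj z w])) // => y; rewrite inE.
apply: leq_trans (subset_leq_card sub_step) _.
apply: leq_trans (leq_card_setU _ _) _.
apply: leq_trans (leq_add (leqnn _) (leq_trans (card_bigcup_leq _ _) card_nbrs)) _.
by rewrite -{1}[#|S|]muln1 -mulnDr add1n expnS mulnC leq_mul2l IH orbT.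
Qed.

Lemma card_ball_leq (d : nat) (G : graph) (x : vert G) r :
  max_deg_le d G -> #|vert (ball x r)| <= d.+1 ^ r.
Proof. by move=> /(card_within_leq x r); rewrite card_sig (eq_card (B := [set y | within r x y])). Qed.

Definition ball_root (G : graph) (v : vert G) r : vert (ball v r) :=
  exist _ v (etrans (in_set _ _) (within_refl r v)).

Lemma ball_rootE (G : graph) (v : vert G) r (x : vert (ball v r)) :
  (val x == v) = (x == ball_root v r).
Proof. by rewrite -val_eqE. Qed.

Lemma within_ball (G : graph) (v : vert G) r (x : vert (ball v r)) : within r v (val x).
Proof. by have := valP x; rewrite inE. Qed.

Lemma ball_connected (G : graph) (v : vert G) r : connected_graph (ball v r).
Proof.
have from_root s (x : vert (ball v r)) : s <= r -> within s v (val x) ->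
    connect (@adj (ball v r)) (ball_root v r) x.
  elim: s x => [|s IH] x Hs /=.
    by move/eqP=> Hx; rewrite (_ : x = ball_root v r) ?connect0 //; apply: val_inj.
  case/orP => [|/existsP [z /andP [Hz Hzx]]]; first exact/IH/ltnW.
  have Hzm : z \in [set y | within r v y] by rewrite inE (within_mono (ltnW Hs) Hz).
  by apply: connect_trans (IH (exist _ z Hzm) (ltnW Hs) Hz) (connect1 _).
move=> x y; apply: connect_trans (from_root r y (leqnn r) (within_ball y)).
by rewrite sym_connect_sym; [exact: from_root (within_ball x) | exact: adj_sym].
Qed.

Lemma max_deg_le_ball (d : nat) (G : graph) (v : vert G) r :
  max_deg_le d G -> max_deg_le d (ball v r).
Proof.
move=> Hd x; rewrite -(card_imset _ val_inj); apply: leq_trans (Hd (val x)).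
by apply: subset_leq_card; apply/subsetP => y /imsetP [w Hw ->]; rewrite inE.
Qed.

(** * Isomorphism types of balls *)

(* A rooted graph on m <= M vertices, given by an adjacency table (symmetrised and made
   irreflexive by [code_adj]) and a root. *)
Definition rooted_code (M : nat) : finType :=
  {m : 'I_M.+1 & ({ffun 'I_m * 'I_m -> bool} * 'I_m)%type}.

Section CodeGraph.
Variables (M : nat) (t : rooted_code M).

Definition code_adj : rel 'I_(tag t) :=
  fun x y => (x != y) && (tagged t).1 (x, y) && (tagged t).1 (y, x).

Lemma code_adj_sym : symmetric code_adj.
Proof. by move=> x y; rewrite /code_adj eq_sym andbAC. Qed.

Lemma code_adj_irr : irreflexive code_adj.
Proof. by move=> x; rewrite /code_adj eqxx. Qed.

Definition code_graph : graph := Graph code_adj_sym code_adj_irr.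
Definition code_root : vert code_graph := (tagged t).2.
End CodeGraph.

Lemma exists_ball_code M (G : graph) r (w : vert G) :
  #|vert (ball w r)| <= M -> exists t : rooted_code M, ball_iso r w (code_root t).
Proof.
set B := ball w r => HM.
pose t : rooted_code M := existT _ (Ordinal (HM : #|vert B| < M.+1))
  ([ffun xy => @adj B (enum_val xy.1) (enum_val xy.2)], enum_rank (ball_root w r)).
exists t; apply/rooted_iso_bP.
exists (fun x : vert B => enum_rank x : vert (code_graph t)).
exists (fun y : vert (code_graph t) => enum_val (y : 'I_#|vert B|)).
split=> [x|y|x /eqP Hx|x y] /=.
- by rewrite enum_rankK.
- by rewrite enum_valK.
- by congr enum_rank; apply: val_inj.
rewrite /code_adj /= !ffunE /= !enum_rankK (inj_eq enum_rank_inj).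
by case: (eqVneq x y) => [->|_] /=; rewrite ?ind_adj_irr // ind_adj_sym andbb.
Qed.

Section BallIso.
Variables (G G' : graph) (r : nat) (w : vert G) (w' : vert G').

Lemma ball_iso_transfer (F : graph) (o : vert F) :
  ball_iso r w (ball_root w' r) -> ball_iso r w' o -> ball_iso r w o.
Proof.
move=> /rooted_iso_bP H1 /rooted_iso_bP H2; apply/rooted_iso_bP.
by apply: rooted_iso_trans H1 H2; rewrite /= eqxx.
Qed.

Lemma ball_iso_sym : ball_iso r w (ball_root w' r) -> ball_iso r w' (ball_root w r).
Proof.
move=> /rooted_iso_bP /(rooted_iso_sym (a := ball_root w r) (ball_rootE (r := r))) H.
by apply/rooted_iso_bP; apply: rooted_iso_eq_root H => x; rewrite /= ball_rootE.
Qed.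
End BallIso.

Lemma ball_iso_common (G G' F : graph) r (w : vert G) (w' : vert G') (o : vert F) :
  ball_iso r w o -> ball_iso r w' o -> ball_iso r w (ball_root w' r).
Proof.
move=> /rooted_iso_bP Hw /rooted_iso_bP Hw'; apply/rooted_iso_bP.
apply: rooted_iso_trans Hw (rooted_iso_sym (a := ball_root w' r) _ Hw'); first by rewrite /= eqxx.
by move=> x; rewrite /= ball_rootE.
Qed.

(* The least code of the ball in the enumeration of codes: it depends only on the isomorphism
   type of the ball ([ball_type_iso]). *)
Definition ball_type M (G : graph) r (w : vert G) : option (rooted_code M) :=
  [pick t : rooted_code M | ball_iso r w (code_root t) &&
            [forall t' : rooted_code M, ball_iso r w (code_root t') ==> (enum_rank t <= enum_rank t')]].

Lemma ball_type_codeP M (G : graph) r (w : vert G) (t : rooted_code M) :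
  ball_type M r w = Some t -> ball_iso r w (code_root t).
Proof. by rewrite /ball_type; case: pickP => // t' /andP [Ht' _] [<-]. Qed.

Lemma ball_type_some M (G : graph) r (w : vert G) :
  #|vert (ball w r)| <= M -> exists t, ball_type M r w = Some t.
Proof.
move=> /exists_ball_code [t0 Ht0]; rewrite /ball_type; case: pickP => [t _|none]; first by exists t.
have [t Ht min_t] :=
  @arg_minnP _ t0 (fun t => ball_iso r w (code_root t)) (fun t => val (enum_rank t)) Ht0.
have := none t; rewrite Ht /=; move/negbT/forallPn => [t' /[!negb_imply] /andP [Ht' /negP]].
by rewrite min_t.
Qed.

Lemma ball_type_iso M (G G' : graph) r (w : vert G) (w' : vert G') :
  ball_iso r w (ball_root w' r) -> ball_type M r w = ball_type M r w'.
Proof.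
move=> Hww'; have Hw'w := ball_iso_sym Hww'.
have same_codes (t : rooted_code M) : ball_iso r w (code_root t) = ball_iso r w' (code_root t).
  by apply/idP/idP; [exact: ball_iso_transfer Hw'w | exact: ball_iso_transfer Hww'].
by apply: eq_pick => t /=; rewrite same_codes; congr andb; apply: eq_forallb => t'; rewrite same_codes.
Qed.

Lemma ball_type_eqP M (G G' : graph) r (w : vert G) (w' : vert G') t :
  ball_type M r w' = Some t -> (ball_type M r w == Some t) = ball_iso r w (ball_root w' r).
Proof.
move=> Hw'; apply/eqP/idP => [/ball_type_codeP Hw|/ball_type_iso ->//].
exact: ball_iso_common Hw (ball_type_codeP Hw').
Qed.

Record ball_bij (G G' : graph) r (v : vert G) (w : vert G')
    (a : vert G -> vert G') (b : vert G' -> vert G) : Prop := BallBij {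
  ball_bij_to : forall y, within r v y -> within r w (a y);
  ball_bij_from : forall y, within r w y -> within r v (b y);
  ball_bij_K : forall y, within r v y -> b (a y) = y;
  ball_bij_K' : forall y, within r w y -> a (b y) = y;
  ball_bij_adj : forall y z, within r v y -> within r v z -> adj (a y) (a z) = adj y z;
  ball_bij_root : a v = w }.

Definition extend (T : finType) (S : {set T}) (U : Type) (h : {x : T | x \in S} -> U) (u0 : U)
  (y : T) : U := if insub y is Some x then h x else u0.

Lemma extend_val (T : finType) (S : {set T}) (U : Type) (h : {x : T | x \in S} -> U) u0 x :
  extend h u0 (val x) = h x.
Proof. by rewrite /extend valK. Qed.

Lemma ball_iso_bij (G G' : graph) r (v : vert G) (w : vert G') :
  ball_iso r v (ball_root w r) -> exists a b, ball_bij r v w a b.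
Proof.
case/rooted_iso_bP => f [g [fK gK fr fadj]].
have inv y : within r v y -> {x : vert (ball v r) | val x = y}.
  by move=> Hy; exists (exist _ y (etrans (in_set _ _) Hy)).
have inw y : within r w y -> {x : vert (ball w r) | val x = y}.
  by move=> Hy; exists (exist _ y (etrans (in_set _ _) Hy)).
exists (extend (val \o f) w), (extend (val \o g) v); split.
- by move=> _ /inv [x <-]; rewrite extend_val within_ball.
- by move=> _ /inw [x <-]; rewrite extend_val within_ball.
- by move=> _ /inv [x <-]; rewrite extend_val /= extend_val /= fK.
- by move=> _ /inw [x <-]; rewrite extend_val /= extend_val /= gK.
- by move=> _ _ /inv [x <-] /inv [x' <-]; rewrite !extend_val; exact: fadj.
- by rewrite -[v]/(val (ball_root v r)) extend_val /= fr //= eqxx.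
Qed.

(** * Scattered tuples *)

(* Distances above 2r+1 make the r-balls disjoint with no edge between two of them. *)
Definition scattered (G : graph) p r (v : 'I_p -> vert G) : bool :=
  [forall i, forall j, (i != j) ==> ~~ within (r + r).+1 (v i) (v j)].

Section Scattered.
Variables (G : graph) (p r : nat) (v : 'I_p -> vert G).
Hypothesis scat : scattered r v.

Lemma scattered_near i j x y : within r (v i) x -> within r (v j) y -> within 1 x y -> i = j.
Proof.
move=> Hx Hy Hxy; apply/eqP/negPn/negP => /(implyP (forallP (forallP scat i) j)).
have := within_trans (within_trans Hx Hxy) (within_sym Hy).
by rewrite addn1 addSn => ->.
Qed.

Lemma scattered_within_eq i j y : within r (v i) y -> within r (v j) y -> i = j.
Proof. by move=> Hi Hj; apply: scattered_near Hi Hj (within_refl 1 y). Qed.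

Lemma scattered_adj_eq i j y z : within r (v i) y -> within r (v j) z -> adj y z -> i = j.
Proof. by move=> Hi Hj /within_adj; apply: scattered_near. Qed.
End Scattered.

Lemma mem_nbhdP (G : graph) p r (v : 'I_p -> vert G) y :
  y \in nbhd r v -> exists i, within r (v i) y.
Proof. by rewrite inE => /existsP. Qed.

Lemma mem_nbhd (G : graph) p r (v : 'I_p -> vert G) i : v i \in nbhd r v.
Proof. by rewrite inE; apply/existsP; exists i; apply: within_refl. Qed.

Section ScatteredIso.
Variables (G G' : graph) (p r : nat) (v : 'I_p -> vert G) (w : 'I_p -> vert G').
Variables (a : 'I_p -> vert G -> vert G') (b : 'I_p -> vert G' -> vert G).
Hypotheses (bij : forall i, ball_bij r (v i) (w i) (a i) (b i))
  (scat_v : scattered r v) (scat_w : scattered r w).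

Let H := induced (nbhd r v).
Let H' := induced (nbhd r w).

Let centre (x : vert H) : 'I_p := xchoose (mem_nbhdP (valP x)).
Let centreP (x : vert H) : within r (v (centre x)) (val x) := xchooseP (mem_nbhdP (valP x)).
Let centre' (x : vert H') : 'I_p := xchoose (mem_nbhdP (valP x)).
Let centreP' (x : vert H') : within r (w (centre' x)) (val x) := xchooseP (mem_nbhdP (valP x)).

Lemma nbhd_map_mem (x : vert H) : a (centre x) (val x) \in nbhd r w.
Proof. by rewrite inE; apply/existsP; exists (centre x); apply: (ball_bij_to (bij _)) (centreP x). Qed.

Lemma nbhd_unmap_mem (x : vert H') : b (centre' x) (val x) \in nbhd r v.
Proof. by rewrite inE; apply/existsP; exists (centre' x); apply: (ball_bij_from (bij _)) (centreP' x). Qed.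

Definition nbhd_map (x : vert H) : vert H' := exist (fun y => y \in nbhd r w) _ (nbhd_map_mem x).
Definition nbhd_unmap (x : vert H') : vert H := exist (fun y => y \in nbhd r v) _ (nbhd_unmap_mem x).

Lemma nbhd_mapK : cancel nbhd_map nbhd_unmap.
Proof.
move=> x; apply: val_inj => /=; have Hx := centreP x.
have Hax : within r (w (centre x)) (a (centre x) (val x)) by apply: (ball_bij_to (bij _)).
by rewrite (scattered_within_eq scat_w (centreP' (nbhd_map x)) Hax) (ball_bij_K (bij _)).
Qed.

Lemma nbhd_unmapK : cancel nbhd_unmap nbhd_map.
Proof.
move=> x; apply: val_inj => /=; have Hx := centreP' x.
have Hbx : within r (v (centre' x)) (b (centre' x) (val x)) by apply: (ball_bij_from (bij _)).
by rewrite (scattered_within_eq scat_v (centreP (nbhd_unmap x)) Hbx) (ball_bij_K' (bij _)).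
Qed.

Lemma nbhd_map_adj (x y : vert H) : adj (nbhd_map x) (nbhd_map y) = adj x y.
Proof.
rewrite /= /ind_adj /=; have Hx := centreP x; have Hy := centreP y.
case: (eqVneq (centre x) (centre y)) => [E|NE].
  by rewrite -E (ball_bij_adj (bij _)) // E.
have Hax : within r (w (centre x)) (a (centre x) (val x)) by apply: (ball_bij_to (bij _)).
have Hay : within r (w (centre y)) (a (centre y) (val y)) by apply: (ball_bij_to (bij _)).
apply/idP/idP => /[dup] A.
  by move/(scattered_adj_eq scat_w Hax Hay); move/eqP: NE.
by move/(scattered_adj_eq scat_v Hx Hy); move/eqP: NE.
Qed.

Lemma nbhd_map_centre j : nbhd_map (exist _ (v j) (mem_nbhd r v j)) = exist _ (w j) (mem_nbhd r w j).
Proof.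
apply: val_inj => /=.
have -> : centre (exist _ (v j) (mem_nbhd r v j)) = j.
  by have := scattered_within_eq scat_v (centreP (exist _ (v j) (mem_nbhd r v j))) (within_refl r (v j)).
exact: (ball_bij_root (bij j)).
Qed.

Lemma models_local_scattered f : models_local r f v = models_local r f w.
Proof.
rewrite /models_local; symmetry; apply: (sat_iso nbhd_mapK nbhd_unmapK nbhd_map_adj) => k /=.
rewrite /tenv; case: insubP => [j _ _|] //=.
rewrite (insubT (fun y => y \in nbhd r v) (mem_nbhd r v j)).
by rewrite (insubT (fun y => y \in nbhd r w) (mem_nbhd r w j)) /= nbhd_map_centre.
Qed.
End ScatteredIso.

Section RealSequences.
Local Open Scope R_scope.

Lemma cv_const (c : R) : Un_cv (fun _ => c) c.
Proof. by move=> eps Heps; exists 0%N => n _; rewrite /Rdist Rminus_diag Rabs_R0. Qed.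

Lemma cv_eq_eventually (u w : nat -> R) l N0 :
  (forall n, (N0 <= n)%N -> u n = w n) -> Un_cv w l -> Un_cv u l.
Proof.
move=> Euw Hw eps Heps; have [N HN] := Hw eps Heps.
exists (maxn N N0) => n /leP; rewrite geq_max => /andP [HNn HN0n].
by rewrite Euw //; apply/HN/leP.
Qed.

Lemma cv_approx (a s e : nat -> R) l N0 :
  Un_cv s l -> Un_cv e 0 -> (forall n, (N0 <= n)%N -> Rabs (a n - s n) <= e n) ->
  Un_cv a l.
Proof.
move=> Hs He Has eps Heps.
have [N1 H1] := Hs (eps / 2) ltac:(lra); have [N2 H2] := He (eps / 2) ltac:(lra).
exists (maxn (maxn N1 N2) N0) => n /leP; rewrite !geq_max => /andP [/andP [Hn1 Hn2] Hn0].
have := H1 n (elimT leP Hn1); have := H2 n (elimT leP Hn2); have := Has n Hn0.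
rewrite /Rdist Rminus_0_r => A3 A2 A1.
have := Rabs_triang (a n - s n) (s n - l); have := Rle_abs (e n).
rewrite (_ : a n - s n + (s n - l) = a n - l); [lra | ring].
Qed.

Lemma cv_big (I : Type) (op : R -> R -> R) (idx : R) (s : seq I) (u : I -> nat -> R) (l : I -> R) :
  (forall a b la lb, Un_cv a la -> Un_cv b lb -> Un_cv (fun n => op (a n) (b n)) (op la lb)) ->
  (forall i, Un_cv (u i) (l i)) ->
  Un_cv (fun n => \big[op/idx]_(i <- s) u i n) (\big[op/idx]_(i <- s) l i).
Proof.
move=> cv_op cv_u; elim: s => [|i s IH].
  by rewrite big_nil; apply: (cv_eq_eventually (N0 := 0)) (cv_const idx) => n _; rewrite big_nil.
rewrite big_cons; apply: (cv_eq_eventually (N0 := 0)) (cv_op _ _ _ _ (cv_u i) IH) => n _.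
exact: big_cons.
Qed.

Lemma cv_div_unbounded (N : nat -> nat) (C : R) :
  (forall M : nat, exists K : nat, forall n, (K <= n)%N -> (M <= N n)%N) ->
  Un_cv (fun n => C / INR (N n)) 0.
Proof.
move=> HN eps Heps.
have Hc : 0 < eps / (Rabs C + 1) by apply: Rdiv_lt_0_compat; have := Rabs_pos C; lra.
have [K0 [HK0 K0pos]] := archimed_cor1 _ Hc.
have [K HK] := HN K0; exists K => n /leP /HK /leP /le_INR HNn.
have K0_gt0 : 0 < INR K0 by apply: lt_0_INR.
rewrite /Rdist Rminus_0_r /Rdiv Rabs_mult Rabs_inv (Rabs_right (INR _)); last lra.
apply: (Rle_lt_trans _ ((Rabs C + 1) * / INR K0)).
  apply: Rmult_le_compat; [exact: Rabs_pos | left; apply: Rinv_0_lt_compat; lra | lra |].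
  exact: Rinv_le_contravar.
have C1_gt0 : 0 < Rabs C + 1 by have := Rabs_pos C; lra.
rewrite (_ : eps = (Rabs C + 1) * (eps / (Rabs C + 1))); last by field; lra.
exact: Rmult_lt_compat_l.
Qed.

Lemma Rabs_ratio_sub_le (A S B N Np C : nat) :
  (0 < N)%N -> (0 < Np)%N -> (A <= S + B)%N -> (S <= A + B)%N -> (N * B <= C * Np)%N ->
  Rabs (INR A / INR Np - INR S / INR Np) <= INR C / INR N.
Proof.
move=> /ltP /lt_0_INR N_gt0 /ltP /lt_0_INR Np_gt0.
move=> /leP /le_INR; rewrite plus_INR => HA /leP /le_INR; rewrite plus_INR => HS.
move=> /leP /le_INR; rewrite !mult_INR => HB.
have HBC : INR B / INR Np <= INR C / INR N.
  apply: (Rmult_le_reg_r (INR N * INR Np)); first exact: Rmult_lt_0_compat.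
  rewrite (_ : INR B / INR Np * _ = INR N * INR B); last by field; lra.
  by rewrite (_ : INR C / INR N * _ = INR C * INR Np); last by field; lra.
rewrite (_ : _ - _ = (INR A - INR S) / INR Np); last by field; lra.
rewrite /Rdiv Rabs_mult Rabs_inv (Rabs_right (INR Np)) -/(Rdiv _ _); last lra.
apply: Rle_trans HBC; apply: Rmult_le_compat_r; first by left; apply: Rinv_0_lt_compat.
by apply: Rabs_le; lra.
Qed.

Lemma INR_expn (N k : nat) : INR (N ^ k) = INR N ^ k.
Proof. by elim: k => [|k IH] //; rewrite expnS mult_INR IH. Qed.

Lemma INR_prod_div (I : Type) (s : seq I) (c : I -> nat) (N : nat) : N <> 0%N ->
  INR (\prod_(i <- s) c i) / INR N ^ size s = \big[Rmult/1]_(i <- s) (INR (c i) / INR N).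
Proof.
move=> /not_0_INR N_neq0; elim: s => [|i s IH]; first by rewrite !big_nil /=; field.
rewrite !big_cons -IH mult_INR /=; field; split=> //; exact: pow_nonzero.
Qed.

Lemma INR_sum_prod_div (X I : Type) (ts : seq X) (s : seq I) (m : X -> nat) (c : X -> I -> nat)
    (N : nat) : N <> 0%N ->
  INR (\sum_(t <- ts) m t * \prod_(i <- s) c t i) / INR (N ^ size s)
  = \big[Rplus/0]_(t <- ts) (INR (m t) * \big[Rmult/1]_(i <- s) (INR (c t i) / INR N)).
Proof.
move=> N_neq0; rewrite (big_morph INR plus_INR (erefl (INR 0))) INR_expn.
rewrite (big_morph (fun x => x / INR N ^ size s) (fun x y => Rdiv_plus_distr x y _) (Rdiv_0_l _)).
by apply: eq_bigr => t _; rewrite mult_INR /Rdiv Rmult_assoc -/(Rdiv _ _) INR_prod_div.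
Qed.

End RealSequences.

Lemma card_sum_nat (T : finType) (P : pred T) : #|[pred x | P x]| = \sum_x (P x : nat).
Proof. by rewrite -sum1_card big_mkcond /=; apply: eq_bigr => x _; rewrite inE; case: (P x). Qed.

Lemma sum_fibers (T X : finType) (h : T -> X) (F : X -> nat) :
  \sum_x F (h x) = \sum_t F t * #|[pred x | h x == t]|.
Proof.
rewrite (partition_big h predT) //=; apply: eq_bigr => t _.
rewrite card_sum_nat big_distrr /= big_mkcond /=; apply: eq_bigr => x _.
by case: eqVneq => [->|]; rewrite ?muln1 ?muln0.
Qed.

Lemma card_ffun_fibers p (T X : finType) (h : T -> X) (t : {ffun 'I_p -> X}) :
  #|[pred v : {ffun 'I_p -> T} | [ffun i => h (v i)] == t]| =
  \prod_(i <- enum 'I_p) #|[pred x | h x == t i]|.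
Proof.
rewrite (_ : \prod_(i <- enum 'I_p) _ = #|family (fun i => [pred x | h x == t i])|); last first.
  by rewrite card_family /image_mem foldrE big_map enumT.
apply: eq_card => v; rewrite !inE; apply/eqP/familyP => [<- i|Hv]; first by rewrite ffunE inE.
by apply/ffunP => i; rewrite ffunE; apply/eqP; have := Hv i; rewrite inE.
Qed.

Section ClosePairs.
Variables (T : finType) (e : rel T) (K p : nat).
Hypothesis deg_e : forall x, #|[pred y | e x y]| <= K.

(* Replacing v_j by a new vertex z and z by v_j is a bijection on pairs (v, z); it maps the pairs
   with [e (v i) (v j)] onto those with [e (v i) z]. *)
Lemma card_close_pair (i j : 'I_p) : i != j ->
  #|T| * #|[pred v : {ffun 'I_p -> T} | e (v i) (v j)]| <= K * #|T| ^ p.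
Proof.
move=> neq_ij; set P := fun v : {ffun 'I_p -> T} => e (v i) (v j).
pose upd (v : {ffun 'I_p -> T}) z : {ffun 'I_p -> T} := [ffun k => if k == j then z else v k].
pose swap vz := (upd vz.1 vz.2, vz.1 j).
have swapK : involutive swap.
  case=> v z; rewrite /swap /upd /= ffunE eqxx; congr pair.
  by apply/ffunP => k; rewrite !ffunE; case: eqVneq => [->|].
have -> : #|T| * #|[pred v | P v]| = \sum_(vz : {ffun 'I_p -> T} * T) P (swap vz).1.
  rewrite [RHS](reindex_inj (inv_inj swapK)).
  under eq_bigr do rewrite swapK.
  rewrite -(pair_big xpredT xpredT (fun v _ => P v : nat)).
  rewrite (card_sum_nat P) big_distrr; apply: eq_bigr => v _.
  by rewrite /= sum_nat_const mulnC.
rewrite -(pair_big xpredT xpredT (fun v z => (P (swap (v, z)).1 : nat))) /=.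
apply: (@leq_trans (\sum_(v : {ffun 'I_p -> T}) K)); last first.
  by rewrite sum_nat_const card_ffun card_ord mulnC.
apply: leq_sum => v _.
apply: leq_trans (deg_e (v i)); rewrite card_sum_nat leq_eqVlt; apply/orP; left; apply/eqP.
by apply: eq_bigr => z _; rewrite /P /swap /upd /= !ffunE eqxx (negbTE neq_ij).
Qed.

Lemma card_some_close_pair :
  #|T| * #|[pred v : {ffun 'I_p -> T} | [exists i, exists j, (i != j) && e (v i) (v j)]]|
    <= p * p * K * #|T| ^ p.
Proof.
pose B (ij : 'I_p * 'I_p) := [set v : {ffun 'I_p -> T} | e (v ij.1) (v ij.2)].
have sub_B : [pred v : {ffun 'I_p -> T} | [exists i, exists j, (i != j) && e (v i) (v j)]]
    \subset \bigcup_(ij | ij.1 != ij.2) B ij.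
  apply/subsetP => v; rewrite inE => /existsP [i /existsP [j /andP [neq_ij Hij]]].
  by apply/bigcupP; exists (i, j); rewrite ?inE.
apply: leq_trans (leq_mul (leqnn _) (leq_trans (subset_leq_card sub_B) (card_bigcup_leq _ _))) _.
rewrite big_distrr /=.
apply: (@leq_trans (\sum_(ij : 'I_p * 'I_p | ij.1 != ij.2) K * #|T| ^ p)).
  apply: leq_sum => -[i j] /= neq_ij; apply: leq_trans (card_close_pair neq_ij).
  by rewrite leq_mul2l; apply/orP; right; apply/subset_leq_card/subsetP => v; rewrite !inE.
apply: (@leq_trans (\sum_(ij : 'I_p * 'I_p) K * #|T| ^ p)).
  by rewrite [X in _ <= X](bigID (fun ij => ij.1 != ij.2)) /= leq_addr.
by rewrite sum_nat_const card_prod card_ord !mulnA.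
Qed.
End ClosePairs.

Lemma not_scatteredE (G : graph) p r (v : 'I_p -> vert G) :
  ~~ scattered r v = [exists i, exists j, (i != j) && within (r + r).+1 (v i) (v j)].
Proof.
apply/idP/idP => [/forallPn [i /forallPn [j]]|/existsP [i /existsP [j /andP [Hij Hw]]]].
  by rewrite negb_imply negbK => Hij; apply/existsP; exists i; apply/existsP; exists j.
by apply/forallPn; exists i; apply/forallPn; exists j; rewrite negb_imply negbK Hij.
Qed.

Lemma card_not_scattered (d : nat) (G : graph) p r : max_deg_le d G ->
  #|vert G| * #|[pred v : {ffun 'I_p -> vert G} | ~~ scattered r v]|
    <= p * p * d.+1 ^ (r + r).+1 * #|vert G| ^ p.
Proof.
move=> Hd; rewrite (eq_card (B := [pred v : {ffun 'I_p -> vert G} |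
  [exists i, exists j, (i != j) && within (r + r).+1 (v i) (v j)]])); last first.
  by move=> v; rewrite !inE /= not_scatteredE.
apply: card_some_close_pair => x.
by rewrite (eq_card (B := [set y | within (r + r).+1 x y])) ?card_within_leq // => y; rewrite inE.
Qed.

(** * From BS-convergence to local convergence *)

Section BSToLocal.
Variables (d : nat) (Gs : nat -> graph).
Hypotheses (Hdeg : forall n, max_deg_le d (Gs n))
  (Hsize : forall M : nat, exists N : nat, forall n, N <= n -> M <= #|vert (Gs n)|)
  (HBS : BS_convergent d Gs).
Variables (p r : nat) (f : form).
Hypothesis f_local : r_local p r f.

Let code := rooted_code (d.+1 ^ r).

Definition vtype n (w : vert (Gs n)) : option code := ball_type _ r w.

Lemma vtype_some n (w : vert (Gs n)) : exists t, vtype w = Some t.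
Proof. exact/ball_type_some/card_ball_leq. Qed.

Definition tuple_type n (v : {ffun 'I_p -> vert (Gs n)}) : {ffun 'I_p -> option code} :=
  [ffun i => vtype (v i)].

(* The value of f on scattered tuples of type t, read off any witness in the whole sequence;
   [models_scattered] shows that it does not depend on the witness. *)
Definition type_sat (t : {ffun 'I_p -> option code}) : bool :=
  if excluded_middle_informative
       (exists n (v : {ffun 'I_p -> vert (Gs n)}), [&& scattered r v, tuple_type v == t & models f v])
  then true else false.

Lemma ball_bij_same_type n m (v : vert (Gs n)) (v' : vert (Gs m)) :
  vtype v = vtype v' -> exists a b, ball_bij r v v' a b.
Proof.
have [t Ht] := vtype_some v'; rewrite Ht => Hv.
by apply: ball_iso_bij; rewrite -(ball_type_eqP _ Ht); apply/eqP.
Qed.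

Lemma models_scattered n (v : {ffun 'I_p -> vert (Gs n)}) :
  scattered r v -> models f v = type_sat (tuple_type v).
Proof.
move=> scat_v; rewrite /type_sat; case: excluded_middle_informative => [witness|no_witness].
  have [m [v' /and3P [scat_v' /eqP same_type]]] := witness; rewrite !f_local.
  have bij i : exists ab, ball_bij r (v i) (v' i) ab.1 ab.2.
    have /ball_bij_same_type [a [b Hab]] : vtype (v i) = vtype (v' i).
      by move/ffunP/(_ i): same_type; rewrite !ffunE.
    by exists (a, b).
  have [ab Hab] := fin_all_exists bij.
  by rewrite (models_local_scattered Hab scat_v scat_v').
by apply/negP => Hf; apply: no_witness; exists n, v; rewrite scat_v eqxx Hf.
Qed.

Definition type_count n (tau : option code) : nat := #|[pred w : vert (Gs n) | vtype w == tau]|.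

Definition type_poly n : nat :=
  \sum_(t : {ffun 'I_p -> option code}) type_sat t * \prod_(i <- enum 'I_p) type_count n (t i).

Lemma type_polyE n : type_poly n = \sum_(v : {ffun 'I_p -> vert (Gs n)}) type_sat (tuple_type v).
Proof.
rewrite (sum_fibers (@tuple_type n) (fun t => type_sat t : nat)).
by apply: eq_bigr => t _; rewrite card_ffun_fibers.
Qed.

Lemma type_poly_approx n :
  let A := #|[pred v : {ffun 'I_p -> vert (Gs n)} | models f v]| in
  let B := #|[pred v : {ffun 'I_p -> vert (Gs n)} | ~~ scattered r v]| in
  A <= type_poly n + B /\ type_poly n <= A + B.
Proof.
rewrite /= type_polyE !card_sum_nat -!big_split /=.
split; apply: leq_sum => v _; case: (boolP (scattered r v)) => [scat_v|_] /=.
- by rewrite models_scattered // addn0.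
- by rewrite addn1; case: (models f v).
- by rewrite models_scattered // addn0.
- by rewrite addn1; case: (type_sat _).
Qed.

Lemma cv_zero_ratio : converges (fun n => Rdiv (INR 0) (INR #|vert (Gs n)|)).
Proof.
by exists R0; apply: (cv_eq_eventually (N0 := 0)) (cv_const 0) => n _; rewrite /Rdiv Rmult_0_l.
Qed.

Lemma type_freq_converges tau :
  converges (fun n => Rdiv (INR (type_count n tau)) (INR #|vert (Gs n)|)).
Proof.
case: tau => [t|]; last first.
  move: cv_zero_ratio; congr converges; apply: functional_extensionality => n; congr (Rdiv (INR _) _).
  by apply/esym/eq_card0 => w; rewrite !inE; have [t ->] := vtype_some w.
case: (classic (exists m (w0 : vert (Gs m)), vtype w0 = Some t)) => [[m [w0 Hw0]]|none].
  have := HBS r (ball_root w0 r) (@ball_connected _ w0 r) (@max_deg_le_ball _ _ w0 r (@Hdeg m)).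
  congr converges; apply: functional_extensionality => n; congr (Rdiv (INR _) _).
  by apply: eq_card => w; rewrite !inE /= (ball_type_eqP _ Hw0).
move: cv_zero_ratio; congr converges; apply: functional_extensionality => n; congr (Rdiv (INR _) _).
by apply/esym/eq_card0 => w; rewrite !inE; apply/eqP => Hw; apply: none; exists n, w.
Qed.

Lemma stone_converges : converges (fun n => stone p f (Gs n)).
Proof.
have [l Hl] := fin_all_exists type_freq_converges.
pose lim := \big[Rplus/R0]_(t : {ffun 'I_p -> option code})
              Rmult (INR (type_sat t)) (\big[Rmult/R1]_(i <- enum 'I_p) l (t i)).
have [N1 HN1] := Hsize 1.
pose freq_poly n := \big[Rplus/R0]_(t : {ffun 'I_p -> option code}) Rmult (INR (type_sat t))
  (\big[Rmult/R1]_(i <- enum 'I_p) Rdiv (INR (type_count n (t i))) (INR #|vert (Gs n)|)).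
have poly_cv : Un_cv (fun n => Rdiv (INR (type_poly n)) (INR (#|vert (Gs n)| ^ p))) lim.
  apply: (cv_eq_eventually (w := freq_poly) (N0 := N1)) => [n /HN1 size_gt0|].
    rewrite -[in X in _ ^ X](size_enum_ord p) INR_sum_prod_div //.
    by move/lt0n_neq0/eqP: size_gt0.
  apply: cv_big => [? ? ? ?|t]; first exact: CV_plus.
  apply: CV_mult; first exact: cv_const.
  by apply: cv_big => [? ? ? ?|i]; [exact: CV_mult | exact: Hl].
exists lim; apply: cv_approx poly_cv (cv_div_unbounded (INR (p * p * d.+1 ^ (r + r).+1)) Hsize) _.
move=> n /HN1 size_gt0; have [A_le B_le] := type_poly_approx n.
apply: (Rabs_ratio_sub_le size_gt0 _ A_le B_le (card_not_scattered p r (@Hdeg n))).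
by rewrite expn_gt0 size_gt0.
Qed.

End BSToLocal.

(** * The ball formula *)

(* dist(x_a, x_b) <= r, using x_m, x_(m+1), ... as bound variables. *)
Fixpoint FWithin (r a b m : nat) : form :=
  match r with
  | 0 => FEq a b
  | r'.+1 => FOr (FWithin r' a b m) (FEx m (FAnd (FWithin r' a m m.+1) (FAdj m b)))
  end.

Definition FBigAnd (l : seq form) : form := foldr FAnd FTrue l.
Definition FBigOr (l : seq form) : form := foldr FOr (FNot FTrue) l.
Definition FBigEx (vs : seq nat) (g : form) : form := foldr FEx g vs.

Lemma sat_FBigAnd (G : graph) e l : @sat G e (FBigAnd l) = all (sat e) l.
Proof. by elim: l => //= h l ->. Qed.

Lemma sat_FBigOr (G : graph) e l : @sat G e (FBigOr l) = has (sat e) l.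
Proof. by elim: l => //= h l ->. Qed.

Lemma sat_FWithin (G : graph) r (e : nat -> option (vert G)) a b m : a < m -> b < m ->
  sat e (FWithin r a b m) = if (e a, e b) is (Some x, Some y) then within r x y else false.
Proof.
elim: r e b m => [|r IH] e b m Ha Hb /=; first by case: (e a) => [x|]; case: (e b).
rewrite IH //.
have sat_step z : sat (assign e m z) (FWithin r a m m.+1) = if e a is Some x then within r x z else false.
  by rewrite IH ?(ltn_trans Ha) // /assign (ltn_eqF Ha) eqxx.
case Ea: (e a) => [x|]; case Eb: (e b) => [y|] /=.
- by congr orb; apply: eq_existsb => z; rewrite sat_step Ea /= /assign eqxx (ltn_eqF Hb) Eb.
- by apply/existsP => -[z]; rewrite /= /assign eqxx (ltn_eqF Hb) Eb andbF.
- by apply/existsP => -[z]; rewrite /= sat_step Ea.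
- by apply/existsP => -[z]; rewrite /= sat_step Ea.
Qed.

Lemma sat_FBigEx (G : graph) (z0 : vert G) (vs : seq nat) g e : uniq vs ->
  sat e (FBigEx vs g) <-> exists y : nat -> vert G, sat (fun n => if n \in vs then Some (y n) else e n) g.
Proof.
elim: vs e => [|v vs IH] e /=.
  by move=> _; split => [He|[y]]; [exists (fun _ => z0)|]; rewrite (eq_sat _ (e' := e)).
case/andP => v_notin uniq_vs.
have assignE (y : nat -> vert G) n : (if n \in v :: vs then Some (y n) else e n) =
    if n \in vs then Some (y n) else assign e v (y v) n.
  by rewrite in_cons /assign; case: eqVneq => [->|] //=; rewrite (negbTE v_notin).
split.
  case/existsP => u /(IH _ uniq_vs) [y Hy]; exists (fun n => if n == v then u else y n).
  rewrite (eq_sat _ (assignE _)) /= eqxx; apply: etrans Hy; apply: eq_sat => n.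
  by case: ifP => // n_in; case: eqVneq => // nv; rewrite -nv n_in in v_notin.
case=> y; rewrite (eq_sat _ (assignE _)) => Hy; apply/existsP; exists (y v).
by apply/(IH _ uniq_vs); exists y.
Qed.

Lemma all_enum (T : finType) (P : pred T) : all P (enum T) = [forall x, P x].
Proof. by apply/allP/forallP => H x //; rewrite H ?mem_enum. Qed.

Lemma all_free_FBigAnd (P : pred nat) l :
  all P (free (FBigAnd l)) = all (fun h => all P (free h)) l.
Proof. by elim: l => //= h l <-; rewrite all_cat. Qed.

Lemma all_free_FBigOr (P : pred nat) l :
  all P (free (FBigOr l)) = all (fun h => all P (free h)) l.
Proof. by elim: l => //= h l <-; rewrite all_cat. Qed.

Lemma mem_free_FBigEx x vs g : (x \in free (FBigEx vs g)) = (x \in free g) && (x \notin vs).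
Proof.
elim: vs => [|v vs IH] /=; first by rewrite andbT.
by rewrite mem_filter IH in_cons negb_or andbCA andbA.
Qed.

Lemma free_FWithin x r a b m :
  x \in free (FWithin r a b m) -> a < m -> b < m -> (x == a) || (x == b).
Proof.
elim: r b m => [|r IH] b m /=; first by rewrite !inE.
rewrite mem_cat mem_filter mem_cat.
case/orP => [x_in a_lt b_lt|/andP [x_neq_m /orP [x_in|x_in]] a_lt b_lt].
- exact: IH x_in a_lt b_lt.
- by have := IH _ _ x_in (leqW a_lt) (ltnSn m); rewrite (negbTE x_neq_m) orbF => ->.
- by move: x_in; rewrite !inE (negbTE x_neq_m) /= => ->; rewrite orbT.
Qed.

Section BallFormula.
Variables (F : graph) (o : vert F) (r : nat).

Definition vertex_var (u : vert F) : nat := (index u (enum F)).+1.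
Definition fresh_var : nat := (size (enum F)).+1.
Definition vertex_vars : seq nat := [seq vertex_var u | u <- enum F].

Lemma vertex_var_inj : injective vertex_var.
Proof. by move=> u u' [] E; rewrite -(nth_index o (mem_enum F u)) E nth_index // mem_enum. Qed.

Lemma vertex_var_lt u : vertex_var u < fresh_var.
Proof. by rewrite /vertex_var /fresh_var ltnS index_mem mem_enum. Qed.

Lemma vertex_vars_uniq : uniq vertex_vars.
Proof. by rewrite map_inj_uniq ?enum_uniq //; apply: vertex_var_inj. Qed.

Lemma mem_vertex_vars n : (n \in vertex_vars) = (0 < n < fresh_var).
Proof.
apply/mapP/idP => [[u _ ->]|/andP [n_gt0 n_lt]]; first by rewrite vertex_var_lt.
exists (nth o (enum F) n.-1); first by rewrite mem_nth // -ltnS prednK.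
by rewrite /vertex_var index_uniq ?enum_uniq ?prednK // -ltnS prednK.
Qed.

Definition f_distinct : form :=
  FBigAnd [seq FBigAnd [seq if u == u' then FTrue else FNot (FEq (vertex_var u) (vertex_var u'))
                       | u' <- enum F] | u <- enum F].
Definition f_adj_pattern : form :=
  FBigAnd [seq FBigAnd [seq if adj u u' then FAdj (vertex_var u) (vertex_var u')
                            else FNot (FAdj (vertex_var u) (vertex_var u')) | u' <- enum F]
          | u <- enum F].
Definition f_root : form := FEq (vertex_var o) 0.
Definition f_in_ball : form := FBigAnd [seq FWithin r 0 (vertex_var u) fresh_var | u <- enum F].
Definition f_cover : form :=
  FAll fresh_var (FOr (FNot (FWithin r 0 fresh_var fresh_var.+1))
                      (FBigOr [seq FEq fresh_var (vertex_var u) | u <- enum F])).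

(* x_0 is the centre and x_(vertex_var u) the image of u : F; the conjuncts say that these
   images are distinct, induce a copy of F rooted at x_0, and form exactly the r-ball of x_0. *)
Definition ball_body : form := FBigAnd [:: f_distinct; f_adj_pattern; f_root; f_in_ball; f_cover].
Definition ball_formula : form := FBigEx vertex_vars ball_body.

Section Semantics.
Variables (G : graph) (x : vert G) (y : nat -> vert G) (e : nat -> option (vert G)).
Hypothesis e0 : e 0 = Some x.
Let env n := if n \in vertex_vars then Some (y n) else e n.
Let Y u := y (vertex_var u).

Lemma env_centre : env 0 = Some x.
Proof. by rewrite /env mem_vertex_vars. Qed.

Lemma env_vertex_var u : env (vertex_var u) = Some (Y u).
Proof. by rewrite /env mem_vertex_vars vertex_var_lt. Qed.

Lemma sat_f_distinct : sat env f_distinct = [forall u, forall u', (u != u') ==> (Y u != Y u')].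
Proof.
rewrite sat_FBigAnd all_map -all_enum; apply: eq_all => u /=.
rewrite sat_FBigAnd all_map -all_enum; apply: eq_all => u' /=.
by case: eqVneq => //= _; rewrite !env_vertex_var.
Qed.

Lemma sat_f_adj_pattern : sat env f_adj_pattern = [forall u, forall u', adj (Y u) (Y u') == adj u u'].
Proof.
rewrite sat_FBigAnd all_map -all_enum; apply: eq_all => u /=.
rewrite sat_FBigAnd all_map -all_enum; apply: eq_all => u' /=.
by case: (adj u u'); rewrite /= !env_vertex_var //=; case: (adj _ _).
Qed.

Lemma sat_f_root : sat env f_root = (Y o == x).
Proof. by rewrite /= env_vertex_var env_centre. Qed.

Lemma sat_f_in_ball : sat env f_in_ball = [forall u, within r x (Y u)].
Proof.
rewrite sat_FBigAnd all_map -all_enum; apply: eq_all => u /=.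
by rewrite sat_FWithin ?vertex_var_lt // env_centre env_vertex_var.
Qed.

Lemma sat_f_cover : sat env f_cover = [forall z, within r x z ==> [exists u, z == Y u]].
Proof.
rewrite /f_cover /=; apply: eq_forallb => z.
have assign_centre : assign env fresh_var z 0 = Some x by rewrite /assign env_centre.
have assign_fresh : assign env fresh_var z fresh_var = Some z by rewrite /assign eqxx.
have sat_eq u : sat (assign env fresh_var z) (FEq fresh_var (vertex_var u)) = (z == Y u).
  by rewrite /= assign_fresh /assign (ltn_eqF (vertex_var_lt u)) env_vertex_var.
rewrite sat_FWithin // assign_centre assign_fresh /= sat_FBigOr has_map -implybE; congr (_ ==> _).
apply/hasP/existsP => [[u _ Hu]|[u Hu]]; exists u; rewrite ?mem_enum //.
- by rewrite -sat_eq.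
- by rewrite -sat_eq in Hu.
Qed.

Lemma sat_ball_body : sat env ball_body =
  [&& [forall u, forall u', (u != u') ==> (Y u != Y u')],
      [forall u, forall u', adj (Y u) (Y u') == adj u u'], Y o == x,
      [forall u, within r x (Y u)] & [forall z, within r x z ==> [exists u, z == Y u]]].
Proof.
rewrite -sat_f_distinct -sat_f_adj_pattern -sat_f_root -sat_f_in_ball -sat_f_cover.
by rewrite sat_FBigAnd /= andbT.
Qed.
End Semantics.

Definition ball_param (G : graph) (x : vert G) (Y : vert F -> vert G) : Prop :=
  [/\ injective Y, forall u u', adj (Y u) (Y u') = adj u u', Y o = x &
      forall z, within r x z <-> exists u, z = Y u].

Lemma ball_paramP (G : graph) (x : vert G) (Y : vert F -> vert G) :
  reflect (ball_param x Y)
    [&& [forall u, forall u', (u != u') ==> (Y u != Y u')],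
        [forall u, forall u', adj (Y u) (Y u') == adj u u'], Y o == x,
        [forall u, within r x (Y u)] & [forall z, within r x z ==> [exists u, z == Y u]]].
Proof.
apply: (iffP and5P) => [[/forallP D /forallP A /eqP R /forallP I /forallP C]|[Yinj A R C]].
  split=> // [u u' Yuu'|u u'|z]; last split.
  - by apply/eqP/negPn/negP => /(implyP (forallP (D u) u')); rewrite Yuu' eqxx.
  - exact/eqP/(forallP (A u)).
  - by move=> /(implyP (C z)) /existsP [u /eqP ->]; exists u.
  - by case=> u ->.
split; do ?[apply/forallP => u]; do ?[apply/forallP => u'].
- by apply/implyP; apply: contra_neq => /Yinj.
- by rewrite A.
- by rewrite R.
- by apply/(C (Y u)); exists u.
- by apply/implyP => /C [v ->]; apply/existsP; exists v.
Qed.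

Lemma ball_iso_paramP (G : graph) (x : vert G) : ball_iso r x o <-> exists Y, ball_param x Y.
Proof.
split=> [/rooted_iso_bP [f [g [fK gK fr fadj]]]|[Y [Yinj Yadj Yo Yball]]].
  exists (fun u => val (g u)); split=> [u u' /val_inj /(can_inj gK) //|u u'||z].
  - by have := fadj (g u) (g u'); rewrite !gK.
  - by rewrite -(fr (ball_root x r)) ?fK //= eqxx.
  split=> [z_in|[u ->]]; last exact: within_ball.
  by exists (f (exist _ z (etrans (in_set _ _) z_in))); rewrite fK.
have preimage (a : vert (ball x r)) : exists u, val a == Y u.
  by have [u ->] := (Yball _).1 (within_ball a); exists u.
apply/rooted_iso_bP.
pose g u : vert (ball x r) := exist _ (Y u) (etrans (in_set _ _) ((Yball _).2 (ex_intro _ u erefl))).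
exists (fun a => xchoose (preimage a)), g.
have fP a : val a = Y (xchoose (preimage a)) by apply/eqP; exact: xchooseP (preimage a).
split=> [a|u|a /eqP a_root|a b].
- by apply: val_inj; rewrite /= -fP.
- by apply: Yinj; rewrite -fP.
- by apply: Yinj; rewrite -fP a_root Yo.
- by rewrite -Yadj -!fP.
Qed.

Lemma sat_ball_formula (G : graph) (x : vert G) (e : nat -> option (vert G)) :
  e 0 = Some x -> sat e ball_formula = ball_iso r x o.
Proof.
move=> e0; apply/idP/idP.
  case/(sat_FBigEx x _ _ vertex_vars_uniq) => y; rewrite (sat_ball_body y e0) => /ball_paramP Hy.
  by apply/ball_iso_paramP; exists (fun u => y (vertex_var u)).
case/ball_iso_paramP => Y HY; apply/(sat_FBigEx x _ _ vertex_vars_uniq).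
exists (fun n => Y (nth o (enum F) n.-1)); rewrite (sat_ball_body _ e0).
apply/(@ball_paramP _ x (fun u => Y (nth o (enum F) (vertex_var u).-1))).
suff -> : (fun u => Y (nth o (enum F) (vertex_var u).-1)) = Y by [].
by apply: functional_extensionality => u; rewrite nth_index ?mem_enum.
Qed.

Lemma ball_formula_free : free_among 1 ball_formula.
Proof.
pose P x := x \in 0 :: vertex_vars.
have var_P u : P (vertex_var u) by rewrite /P inE mem_vertex_vars vertex_var_lt orbT.
have FWithin_P u : all P (free (FWithin r 0 (vertex_var u) fresh_var)).
  apply/allP => x /free_FWithin /(_ (ltn0Sn _) (vertex_var_lt u)) /orP [] /eqP ->.
  - exact: mem_head.
  - exact: var_P.
suff body_P : all P (free ball_body).
  apply/allP => x; rewrite mem_free_FBigEx => /andP [/(allP body_P)].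
  by rewrite /P inE => /orP [/eqP -> //|->].
rewrite all_free_FBigAnd; do ![apply/andP; split] => //=.
- rewrite all_free_FBigAnd all_map; apply/allP => u _ /=.
  rewrite all_free_FBigAnd all_map; apply/allP => u' _ /=.
  by case: eqVneq => //= _; rewrite !var_P.
- rewrite all_free_FBigAnd all_map; apply/allP => u _ /=.
  rewrite all_free_FBigAnd all_map; apply/allP => u' _ /=.
  by case: adj; rewrite /= !var_P.
- by rewrite all_free_FBigAnd all_map; apply/allP => u _ /=.
rewrite all_filter all_cat; apply/andP; split.
  apply/allP => x /free_FWithin /(_ (ltn0Sn _) (ltnSn _)) /orP [] /eqP ->.
  - by apply/implyP => _; apply: mem_head.
  - by apply/implyP; rewrite eqxx.
rewrite all_free_FBigOr all_map; apply/allP => u _.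
by rewrite /preim /= eqxx var_P implybT.
Qed.
End BallFormula.

Lemma within_val (G : graph) (S : {set vert G}) s (a b : vert (induced S)) :
  within s a b -> within s (val a) (val b).
Proof.
elim: s b => [|s IH] b /=; first by move/eqP ->.
case/orP => [/IH ->//|/existsP [z /andP [Hz Hzb]]].
by apply/orP; right; apply/existsP; exists (val z); rewrite IH.
Qed.

Lemma within_induced (G : graph) (S : {set vert G}) s (a b : vert (induced S)) :
  (forall y, within s (val a) y -> y \in S) -> within s (val a) (val b) -> within s a b.
Proof.
elim: s b => [|s IH] b /= S_ball; first by move/eqP/val_inj ->.
have S_ball' y : within s (val a) y -> y \in S by move/(within_mono (leqnSn s))/S_ball.
case/orP => [/(IH _ S_ball') ->//|/existsP [z /andP [Hz Hzb]]].
apply/orP; right; apply/existsP; exists (exist _ z (S_ball' _ Hz)).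
by rewrite (IH (exist _ z (S_ball' _ Hz)) S_ball' Hz).
Qed.

Lemma ball_induced_iso (G : graph) (S : {set vert G}) (x0 : vert (induced S)) r :
  (forall y, within r (val x0) y -> y \in S) -> ball_iso r x0 (ball_root (val x0) r).
Proof.
move=> S_ball; apply/rooted_iso_bP.
have to_G (a : vert (ball x0 r)) : val (val a) \in [set y | within r (val x0) y].
  by rewrite inE within_val ?within_ball.
have in_S (b : vert (ball (val x0) r)) : val b \in S by apply/S_ball/within_ball.
have to_S (b : vert (ball (val x0) r)) : exist _ (val b) (in_S b) \in [set y | within r x0 y].
  by rewrite inE within_induced ?within_ball.
exists (fun a => exist (fun y => y \in [set y | within r (val x0) y]) _ (to_G a)).
exists (fun b => exist (fun y => y \in [set y | within r x0 y]) _ (to_S b)).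
split=> [a|b|a /eqP a_x0|a b] //.
- by do 2 apply: val_inj.
- exact: val_inj.
- by apply: val_inj; rewrite /= a_x0.
Qed.

Lemma tenv_ord1 (V : Type) (v : 'I_1 -> V) : tenv v 0 = Some (v ord0).
Proof. by rewrite /tenv; case: insubP => [i _ Hi|] //=; congr (Some (v _)); apply: val_inj. Qed.

Lemma ball_formula_local (F : graph) (o : vert F) r : r_local 1 r (ball_formula o r).
Proof.
move=> G v; rewrite /models /models_local (@sat_ball_formula _ _ _ _ (v ord0)) ?tenv_ord1 //.
pose x' : vert (induced (nbhd r v)) := exist _ (v ord0) (mem_nbhd r v ord0).
rewrite (@sat_ball_formula _ _ _ _ x'); last first.
  by rewrite tenv_ord1 /= (insubT (fun y => y \in nbhd r v) (mem_nbhd r v ord0)).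
have x'_iso : ball_iso r x' (ball_root (v ord0) r).
  by apply: ball_induced_iso => y Hy; rewrite inE; apply/existsP; exists ord0.
apply/idP/idP; first exact: ball_iso_transfer x'_iso.
exact: ball_iso_transfer (ball_iso_sym x'_iso).
Qed.

Lemma card_ffun_ord1 (T : finType) (P : pred T) :
  #|[pred v : {ffun 'I_1 -> T} | P (v ord0)]| = #|[pred x | P x]|.
Proof.
have const_inj : injective (fun x : T => [ffun _ : 'I_1 => x]).
  by move=> x y /ffunP /(_ ord0); rewrite !ffunE.
rewrite -(card_imset [pred x | P x] const_inj); apply: eq_card => v; rewrite !inE /=.
apply/idP/imsetP => [Pv|[x Px ->]]; last by rewrite ffunE.
by exists (v ord0) => //; apply/ffunP => i; rewrite ffunE (ord1 i).
Qed.

Lemma BS_convergent_of_FOlocal1 (d : nat) (Gs : nat -> graph) :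
  FOlocal1_convergent Gs -> BS_convergent d Gs.
Proof.
move=> conv r F o _ _.
have := conv _ (conj (ball_formula_free o r) (ex_intro _ r (ball_formula_local o r))).
congr converges; apply: functional_extensionality => n; rewrite /stone expn1 -card_ffun_ord1.
by congr (Rdiv (INR _) _); apply: eq_card => v; rewrite !inE /models (sat_ball_formula _ _ (tenv_ord1 v)).
Qed.

Theorem theorem4p5 (d : nat) (Gs : nat -> graph)
  (Hdeg : forall n, max_deg_le d (Gs n))
  (Hsize : forall M : nat, exists N : nat, forall n, N <= n -> M <= #|vert (Gs n)|) :
  (BS_convergent d Gs <-> FOlocal1_convergent Gs) /\
  (FOlocal1_convergent Gs <-> FOlocal_convergent Gs).
Proof.
have local_of_BS : BS_convergent d Gs -> FOlocal_convergent Gs.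
  move=> HBS p f [_ [r f_local]]; exact (stone_converges Hdeg Hsize HBS f_local).
split; split.
- by move=> /local_of_BS conv f; apply: conv.
- exact: BS_convergent_of_FOlocal1.
- by move/BS_convergent_of_FOlocal1/local_of_BS.
- by move=> conv f; apply: conv.
Qed.
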